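(* Let $A$ be an associative algebra and $\{ r_\alpha \}_{\alpha \in \Omega}\subset A\otimes A$ a skew-symmetric associative Yang-Baxter family of type-II, with $r_\alpha=\sum r^{(1)}_\alpha\otimes r^{(2)}_\alpha$. Then the collection $\{ T_\alpha : A^{*} \to A \}_{\alpha \in \Omega}$, $T_\alpha(f) = \sum f (r^{(2)}_\alpha ) r^{(1)}_\alpha$, is an $\mathcal{O}$-operator family on the coadjoint bimodule $A^*$ over $A$, i.e. $T_\alpha(f)\cdot T_\beta(g) = T_{\alpha\beta}\big(T_\alpha(f)\cdot g + f\cdot T_\beta(g)\big)$ for all $f,g\in A^*$, $\alpha,\beta\in\Omega$.
   Context: $\Omega$ is a semigroup. For $r_\alpha=\sum r^{(1)}_\alpha\otimes r^{(2)}_\alpha\in A^{\otimes 2}$ set $r^{12}_\alpha = \sum r^{(1)}_\alpha \otimes r^{(2)}_\alpha \otimes 1$, $r^{13}_\alpha = \sum r^{(1)}_\alpha \otimes 1 \otimes r^{(2)}_\alpha$, $r^{23}_\alpha = \sum 1 \otimes r^{(1)}_\alpha \otimes r^{(2)}_\alpha$ in $A^{\otimes 3}$ (or $(A^+)^{\otimes 3}$, $A^+ = A\oplus\mathbf{k}$ the unitization, if $A$ is non-unital), with componentwise product. $\{r_\alpha\}$ is an associative Yang-Baxter family of type-II if $r^{13}_\alpha r^{12}_\beta - r^{12}_{\alpha \beta} r^{23}_\alpha + r^{23}_\beta r^{13}_{\alpha \beta}=0$ for all $\alpha,\beta\in\Omega$; it is skew-symmetric if $\sum r^{(1)}_\alpha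 \otimes r^{(2)}_\alpha = -\sum r^{(2)}_\alpha \otimes r^{(1)}_\alpha$ for each $\alpha$. The coadjoint $A$-bimodule $A^*$ has actions $(a \cdot f)(b)=f(b \cdot a)$ and $(f \cdot a)(b)=f(a \cdot b)$. *)

From HB Require Import structures.
From mathcomp Require Import all_boot all_order all_algebra.
Set Implicit Arguments. Unset Strict Implicit. Unset Printing Implicit Defensive.
Import GRing.Theory.
Local Open Scope ring_scope.

Definition is_linear (K : fieldType) (U V : lmodType K) (f : U -> V) : Prop :=
  forall (c : K) (x y : U), f (c *: x + y) = c *: f x + f y.

Definition bilinear_map (K : fieldType) (A W : lmodType K) (phi : A -> A -> W) : Prop :=
  (forall a, is_linear (phi a)) /\ (forall b, is_linear (fun a => phi a b)).

Definition trilinear_map (K : fieldType) (A W : lmodType K)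
    (phi : A -> A -> A -> W) : Prop :=
  (forall a b, is_linear (phi a b)) /\ (forall a c, is_linear (fun b => phi a b c))
  /\ (forall b c, is_linear (fun a => phi a b c)).

Definition assoc_algebra (K : fieldType) (A : lmodType K) (mul : A -> A -> A) : Prop :=
  bilinear_map mul /\ (forall a b c, mul a (mul b c) = mul (mul a b) c).

Definition semigroup (Omega : Type) (op : Omega -> Omega -> Omega) : Prop :=
  forall x y z, op x (op y z) = op (op x y) z.

(* An element of A (x) A is given by a finite sum of pure tensors
   sum_i a_i (x) b_i, i.e. a list of pairs (a_i, b_i).  Equality in the tensor
   product is expressed by its universal property: a formal combination
   sum_i c_i a_i (x) b_i (x) d_i vanishes in A (x) A (x) A iff every trilinear
   map sends it to 0. *)
Definition tensor2_zero (K : fieldType) (A : lmodType K) (s : seq (K * (A * A))) : Prop :=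
  forall (W : lmodType K) (phi : A -> A -> W), bilinear_map phi ->
    \sum_(x <- s) x.1 *: phi x.2.1 x.2.2 = 0.

Definition tensor3_zero (K : fieldType) (A : lmodType K)
    (s : seq (K * (A * A * A))) : Prop :=
  forall (W : lmodType K) (phi : A -> A -> A -> W), trilinear_map phi ->
    \sum_(x <- s) x.1 *: phi x.2.1.1 x.2.1.2 x.2.2 = 0.

Definition skew_symmetric (K : fieldType) (A : lmodType K) (r : seq (A * A)) : Prop :=
  tensor2_zero ([seq (1, p) | p <- r] ++ [seq (1, (p.2, p.1)) | p <- r]).

(* r13_a r12_b - r12_(ab) r23_a + r23_b r13_(ab) = 0, with the products
   computed componentwise (all terms lie in A (x) A (x) A):
   (a (x) 1 (x) b)(c (x) d (x) 1) = ac (x) d (x) b,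
   (a (x) b (x) 1)(1 (x) c (x) d) = a (x) bc (x) d,
   (1 (x) c (x) d)(e (x) 1 (x) f) = e (x) c (x) df. *)
Definition AYB_family_II (K : fieldType) (A : lmodType K) (mul : A -> A -> A)
    (Omega : Type) (op : Omega -> Omega -> Omega) (r : Omega -> seq (A * A)) : Prop :=
  forall alpha beta : Omega,
    tensor3_zero
      ([seq (1, (mul p.1 q.1, q.2, p.2)) | p <- r alpha, q <- r beta]
       ++ [seq (-1, (p.1, mul p.2 q.1, q.2)) | p <- r (op alpha beta), q <- r alpha]
       ++ [seq (1, (q.1, p.1, mul p.2 q.2)) | p <- r beta, q <- r (op alpha beta)]).

Definition Top (K : fieldType) (A : lmodType K) (r : seq (A * A)) (f : A -> K) : A :=
  \sum_(p <- r) f p.2 *: p.1.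

Definition coad_left (K : fieldType) (A : lmodType K) (mul : A -> A -> A)
    (a : A) (f : A -> K) : A -> K := fun b => f (mul b a).
Definition coad_right (K : fieldType) (A : lmodType K) (mul : A -> A -> A)
    (f : A -> K) (a : A) : A -> K := fun b => f (mul a b).

From HB Require Import structures.
From mathcomp Require Import all_boot all_order all_algebra.
Set Implicit Arguments. Unset Strict Implicit. Unset Printing Implicit Defensive.
Import GRing.Theory.
Local Open Scope ring_scope.

(* Write r_alpha = sum_i a_i (x) b_i and evaluate the type-II equation on the
   trilinear map u (x) v (x) w |-> f(w) g(v) u.  Its three terms become
   T_alpha(f) T_beta(g), T_(alpha beta)(T_alpha(f) . g), and a term which
   skew-symmetry of r_beta turns into - T_(alpha beta)(f . T_beta(g)). *)

Section IsLinear.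
Variables (K : fieldType) (U V : lmodType K) (h : U -> V).
Hypothesis h_lin : is_linear h.

Lemma is_linear0 : h 0 = 0.
Proof.
by have /eqP := h_lin 1 0 0; rewrite !scale1r addr0 eq_sym -subr_eq0 addrK => /eqP.
Qed.

Lemma is_linearD x y : h (x + y) = h x + h y.
Proof. by have := h_lin 1 x y; rewrite !scale1r. Qed.

Lemma is_linearZ c x : h (c *: x) = c *: h x.
Proof. by have := h_lin c x 0; rewrite !addr0 is_linear0 addr0. Qed.

Lemma is_linear_sum I (s : seq I) (F : I -> U) :
  h (\sum_(i <- s) F i) = \sum_(i <- s) h (F i).
Proof.
elim: s => [|i s IH]; first by rewrite !big_nil is_linear0.
by rewrite !big_cons is_linearD IH.
Qed.

End IsLinear.

Section TensorEquations.
Variables (K : fieldType) (A : lmodType K).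

Lemma skew_symmetric_swap (r : seq (A * A)) (W : lmodType K) (phi : A -> A -> W) :
  skew_symmetric r -> bilinear_map phi ->
  \sum_(p <- r) phi p.1 p.2 = - \sum_(p <- r) phi p.2 p.1.
Proof.
move=> skew_r /skew_r; rewrite big_cat !big_map /=.
under eq_bigr do rewrite scale1r; under [X in _ + X]eq_bigr do rewrite scale1r.
by move/eqP; rewrite addr_eq0 => /eqP.
Qed.

Lemma AYB_family_II_contract (mul : A -> A -> A) (Omega : Type)
    (op : Omega -> Omega -> Omega) (r : Omega -> seq (A * A))
    (W : lmodType K) (phi : A -> A -> A -> W) (alpha beta : Omega) :
  AYB_family_II mul op r -> trilinear_map phi ->
  \sum_(p <- r alpha) \sum_(q <- r beta) phi (mul p.1 q.1) q.2 p.2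
  = \sum_(p <- r (op alpha beta)) \sum_(q <- r alpha) phi p.1 (mul p.2 q.1) q.2
    - \sum_(p <- r beta) \sum_(q <- r (op alpha beta)) phi q.1 p.1 (mul p.2 q.2).
Proof.
move=> AYB /(AYB alpha beta); rewrite !big_cat !big_allpairs_dep /=.
under eq_bigr do under eq_bigr do rewrite scale1r.
under [X in _ + (X + _)]eq_bigr do under eq_bigr do rewrite scaleN1r.
under [X in _ + (_ + X)]eq_bigr do under eq_bigr do rewrite scale1r.
under [X in _ + (X + _)]eq_bigr do rewrite sumrN.
rewrite sumrN.
by move/eqP; rewrite addrA addr_eq0 subr_eq addrC => /eqP.
Qed.

End TensorEquations.

Section Contractions.
Variables (K : fieldType) (A : lmodType K) (mul : A -> A -> A).
Hypothesis mul_bilinear : bilinear_map mul.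

Lemma trilinear_scale_functionals (f g : A -> K) :
  is_linear (f : A -> K^o) -> is_linear (g : A -> K^o) ->
  trilinear_map (fun u v w : A => (f w * g v) *: u).
Proof.
move=> f_lin g_lin; split; [|split] => a b c x y /=.
- by rewrite (is_linearD f_lin) (is_linearZ f_lin) mulrDl scalerDl -mulrA scalerA.
- by rewrite (is_linearD g_lin) (is_linearZ g_lin) mulrDr scalerDl mulrCA scalerA.
- by rewrite scalerDr !scalerA mulrC.
Qed.

Lemma bilinear_contract_mulr (W : lmodType K) (phi : A -> A -> A -> W)
    (s : seq (A * A)) :
  trilinear_map phi ->
  bilinear_map (fun u v => \sum_(q <- s) phi q.1 u (mul v q.2)).
Proof.
have [_ mul_linl] := mul_bilinear.
move=> [phi_lin3 [phi_lin2 _]]; split => a c x y /=;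
  rewrite scaler_sumr -big_split; apply: eq_bigr => q _ /=.
- by rewrite (is_linearD (mul_linl _)) (is_linearZ (mul_linl _)) phi_lin3.
- by rewrite phi_lin2.
Qed.

Variables (f g : A -> K).
Hypotheses (f_lin : is_linear (f : A -> K^o)) (g_lin : is_linear (g : A -> K^o)).

Lemma mul_Top (r s : seq (A * A)) :
  mul (Top r f) (Top s g)
  = \sum_(p <- r) \sum_(q <- s) (f p.2 * g q.2) *: mul p.1 q.1.
Proof.
have [mul_linr mul_linl] := mul_bilinear.
rewrite /Top (is_linear_sum (mul_linl _)); apply: eq_bigr => p _.
rewrite (is_linearZ (mul_linl _)) (is_linear_sum (mul_linr _)) scaler_sumr.
by apply: eq_bigr => q _; rewrite (is_linearZ (mul_linr _)) scalerA.
Qed.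

Lemma Top_coad_left (r s : seq (A * A)) :
  Top r (coad_left mul (Top s f) g)
  = \sum_(p <- r) \sum_(q <- s) (f q.2 * g (mul p.2 q.1)) *: p.1.
Proof.
have [mul_linr _] := mul_bilinear.
apply: eq_bigr => p _; rewrite /coad_left /Top (is_linear_sum (mul_linr _)).
rewrite (is_linear_sum g_lin) scaler_suml; apply: eq_bigr => q _.
by rewrite (is_linearZ (mul_linr _)) (is_linearZ g_lin).
Qed.

Lemma Top_coad_right (r s : seq (A * A)) :
  Top r (coad_right mul f (Top s g))
  = \sum_(p <- s) \sum_(q <- r) (f (mul p.1 q.2) * g p.2) *: q.1.
Proof.
have [_ mul_linl] := mul_bilinear.
rewrite exchange_big; apply: eq_bigr => q _.
rewrite /coad_right /Top (is_linear_sum (mul_linl _)).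
rewrite (is_linear_sum f_lin) scaler_suml; apply: eq_bigr => p _.
by rewrite (is_linearZ (mul_linl _)) (is_linearZ f_lin) mulrC.
Qed.

End Contractions.

Lemma TopD (K : fieldType) (A : lmodType K) (r : seq (A * A)) (f g : A -> K) :
  Top r (fun b => f b + g b) = Top r f + Top r g.
Proof. by rewrite /Top -big_split; apply: eq_bigr => p _; rewrite scalerDl. Qed.

Theorem proposition2p21 (K : fieldType) (A : lmodType K) (mul : A -> A -> A)
    (Omega : Type) (op : Omega -> Omega -> Omega) (r : Omega -> seq (A * A)) :
  assoc_algebra mul -> semigroup op ->
  AYB_family_II mul op r -> (forall alpha, skew_symmetric (r alpha)) ->
  forall (alpha beta : Omega) (f g : A -> K),
    is_linear (f : A -> K^o) -> is_linear (g : A -> K^o) ->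
    mul (Top (r alpha) f) (Top (r beta) g)
    = Top (r (op alpha beta))
        (fun b => coad_left mul (Top (r alpha) f) g b
                  + coad_right mul f (Top (r beta) g) b).
Proof.
move=> [mul_bilinear _] _ AYB skew alpha beta f g f_lin g_lin.
have phi_tri := trilinear_scale_functionals f_lin g_lin.
have := AYB_family_II_contract alpha beta AYB phi_tri.
have := skew_symmetric_swap (skew beta)
  (bilinear_contract_mulr mul_bilinear (r (op alpha beta)) phi_tri).
rewrite exchange_big /= => ->; rewrite opprK -(mul_Top mul_bilinear) => ->.
by rewrite TopD (Top_coad_left mul_bilinear _ g_lin) (Top_coad_right mul_bilinear _ f_lin).
Qed.
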